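(* Let $G,H$ be finite groups and $f:G\to H$ an identity preserving function such that $[G,G;f]$ is abelian and $n=[G:\mathrm{Stab}_G(f)]$ is relatively prime to $|[G,G;f]|$. Let $a_1,\dots,a_n$ be representatives of the right cosets of $\mathrm{Stab}_G(f)$ in $G$ and let $m$ be an integer with $mn\equiv 1\pmod{|[G,G;f]|}$. Then the distributed average $$\overline{\overline f}(x)=f(x)\Bigl(\prod_{i=1}^n[a_i,x;f]\Bigr)^m$$ is a group homomorphism from $G$ to $H$.
   Context: For $f:G\to H$ and $a\in G$, $f^a(x)=f(a)^{-1}f(ax)$; $f$ is identity preserving if $f(1)=1$. $\mathrm{Stab}_G(f)=\{a\in G: f^a=f\}$ (a subgroup of $G$). The $f$-distributor is $[x,y;f]=f(y)^{-1}f(x)^{-1}f(xy)=f(y)^{-1}f^x(y)$, and $[G,G;f]=\langle [x,y;f]: x,y\in G\rangle$. *)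

From HB Require Import structures.
From mathcomp Require Import all_boot all_order all_algebra all_fingroup.
Set Implicit Arguments. Unset Strict Implicit. Unset Printing Implicit Defensive.

Local Open Scope group_scope.

Section Distributors.
Variables (gT hT : finGroupType) (f : gT -> hT).

Definition fshift (a : gT) (x : gT) : hT := (f a)^-1 * f (a * x).

Definition id_preserving : Prop := f 1 = 1.

Definition fstab : {set gT} := [set a : gT | [forall x, fshift a x == f x]].

Definition distr (x y : gT) : hT := (f y)^-1 * (f x)^-1 * f (x * y).

Definition distr_group : {set hT} :=
  <<[set distr xy.1 xy.2 | xy in [set: gT * gT]]>>.

End Distributors.

Definition zexpg (T : finGroupType) (x : T) (m : int) : T :=
  match m with
  | Posz k => x ^+ k
  | Negz k => (x ^+ k.+1)^-1
  end.

From HB Require Import structures.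
From mathcomp Require Import all_boot all_order all_algebra all_fingroup.
From mathcomp Require Import cyclic.
Set Implicit Arguments. Unset Strict Implicit. Unset Printing Implicit Defensive.
Local Open Scope group_scope.

(* Write S := Stab_G(f), D := [G,G;f] and P(x) := prod_i [a_i,x;f].  For s in
   S we have f(s u) = f(s) f(u), hence [s u, w; f] = [u, w; f]; as right
   multiplication by z permutes the cosets S a_i and D is abelian, it follows
   that prod_i [a_i z, w; f] = P(w).  Taking the product over i of the cocycle
   identity
     [u,v;f]^f(w) [uv,w;f] = [v,w;f] [u,vw;f]
   with u = a_i, v = x, w = y therefore gives
     P(x)^f(y) P(y) = [x,y;f]^n P(xy),
   and raising to the power m (an inverse of n modulo |D|) turns this into
   the homomorphism property, since f(xy) = f(x) f(y) [x,y;f]. *)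

Lemma reindex_prod_abelian (gT : finGroupType) (I : finType) (D : {group gT})
    (s : I -> I) (F : I -> gT) :
  abelian D -> (forall i, F i \in D) -> injective s ->
  \prod_i F (s i) = \prod_i F i.
Proof.
move=> abD FD /injF_bij/onW_bij bij_s.
by rewrite [RHS](reindex_bigcprod (bij_s _) (bigcprodEY _ abD (fun i _ => subxx D))).
Qed.

Section IntegerPowers.
Variable gT : finGroupType.
Implicit Types x y g : gT.

Lemma zexpgMn x y m : commute x y -> zexpg (x * y) m = zexpg x m * zexpg y m.
Proof.
move=> cxy; case: m => k /=; rewrite expgMn //.
by rewrite (commuteX2 _ _ cxy) invMg.
Qed.

Lemma zexpgJ x g m : (zexpg x m) ^ g = zexpg (x ^ g) m.
Proof. by case: m => k /=; rewrite ?conjVg conjXg. Qed.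

Lemma zexpgXK (D : {group gT}) x (n : nat) (m : int) :
  x \in D -> (m * n%:Z = 1 %[mod #|D|%:Z])%Z -> zexpg (x ^+ n) m = x.
Proof.
move=> xD; have xD1 := expg_cardG xD; case: m => k /= mn1.
  rewrite -PoszM !modz_nat in mn1; case: mn1 => mn1.
  by rewrite -expgM -(expg_mod _ xD1) mulnC mn1 expg_mod.
have kn1 : ((k.+1 * n + 1) %% #|D| = 0)%N.
  suff : (((k.+1 * n + 1)%N %% #|D|)%Z = 0%Z) by rewrite modz_nat => -[].
  rewrite PoszD -modzDmr -mn1 NegzE GRing.mulNr -PoszM modzDmr.
  by rewrite GRing.subrr mod0z.
have : x ^+ (k.+1 * n + 1) = 1 by rewrite -(expg_mod _ xD1) kn1.
rewrite expgD expg1 -expgM mulnC => /(canRL (mulgK x)) ->.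
by rewrite mul1g invgK.
Qed.

End IntegerPowers.

Section RightTransversal.
Variables (gT : finGroupType) (H : {set gT}) (I : finType) (a : I -> gT).
Hypotheses (H1 : 1 \in H) (inj_a : injective (fun i => H :* a i))
           (im_a : [set H :* a i | i : I] = rcosets H [set: gT]).

Lemma rtransversal_shift z :
  exists2 s : I -> I, injective s & forall i, a i * z \in H :* a (s i).
Proof.
have /fin_all_exists[s sP] i : exists j, H :* a j = H :* (a i * z).
  have : H :* (a i * z) \in rcosets H [set: gT].
    by apply/rcosetsP; exists (a i * z); rewrite ?inE.
  by rewrite -im_a => /imsetP[j _ ->]; exists j.
exists s => [i i' eq_s | i].
  apply: inj_a => /=; have := sP i; rewrite eq_s sP => /(congr1 (rcoset^~ z^-1)).
  by rewrite !rcosetE -!rcosetM !mulgK.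
by rewrite sP; apply/rcosetP; exists 1; rewrite ?mul1g.
Qed.

Lemma prod_rtransversal_shift (hT : finGroupType) (D : {group hT})
    (F : gT -> hT) z :
  abelian D -> (forall u, F u \in D) ->
  (forall h u, h \in H -> F (h * u) = F u) ->
  \prod_i F (a i * z) = \prod_i F (a i).
Proof.
move=> abD FD FH; have [s inj_s azH] := rtransversal_shift z.
rewrite -[RHS](reindex_prod_abelian abD (fun i => FD (a i)) inj_s).
by apply: eq_bigr => i _; have /rcosetP[h hH ->] := azH i; rewrite FH.
Qed.

End RightTransversal.

Section Distributors.
Variables (gT hT : finGroupType) (f : gT -> hT).
Implicit Types u v w x y z : gT.

Canonical distr_group_group := @group _ (distr_group f) (group_set_generated _).

Lemma mem_distr_group u v : distr f u v \in distr_group f.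
Proof. by apply: mem_gen; apply/imsetP; exists (u, v); rewrite ?inE. Qed.

Lemma fMdistr x y : f (x * y) = f x * f y * distr f x y.
Proof. by rewrite /distr !mulgA mulgK mulgV mul1g. Qed.

Lemma distr_cocycle u v w :
  (distr f u v) ^ (f w) * distr f (u * v) w = distr f v w * distr f u (v * w).
Proof. by rewrite /distr conjgE mulgA !mulgA !mulgK. Qed.

Lemma distrJ_mem u v w : (distr f u v) ^ (f w) \in distr_group f.
Proof.
rewrite -(mulgK (distr f (u * v) w) (_ ^ _)) distr_cocycle.
by apply: groupM; [apply: groupM | rewrite groupV]; apply: mem_distr_group.
Qed.

Lemma fstabM s z : s \in fstab f -> f (s * z) = f s * f z.
Proof. by rewrite inE => /forallP/(_ z)/eqP <-; rewrite mulKVg. Qed.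

Lemma fstab1 : id_preserving f -> 1 \in fstab f.
Proof.
by move=> f1; rewrite inE; apply/forallP => z; rewrite /fshift f1 invg1 !mul1g.
Qed.

Lemma distr_fstabM s u z : s \in fstab f -> distr f (s * u) z = distr f u z.
Proof.
move=> sS; rewrite /distr -(mulgA s) !(fstabM _ sS).
by rewrite invMg !mulgA mulgKV.
Qed.

Section Transversal.
Variables (n : nat) (a : 'I_n -> gT).
Hypotheses (f1 : id_preserving f) (abD : abelian (distr_group f))
  (inj_a : injective (fun i => fstab f :* a i))
  (im_a : [set fstab f :* a i | i : 'I_n] = rcosets (fstab f) [set: gT]).

Lemma distr_group_comm (p q : hT) :
  p \in distr_group f -> q \in distr_group f -> commute p q.
Proof. by move=> pD qD; apply: (centsP abD). Qed.

Let P z := \prod_(i < n) distr f (a i) z.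

Lemma distr_prod_mem z : P z \in distr_group f.
Proof. by apply: group_prod => i _; apply: mem_distr_group. Qed.

Lemma distr_prod_shift z w : \prod_(i < n) distr f (a i * z) w = P w.
Proof.
rewrite /P; apply: (prod_rtransversal_shift (fstab1 f1) inj_a im_a
    (F := fun u => distr f u w) z abD) => [u | s u].
  exact: mem_distr_group.
exact: distr_fstabM.
Qed.

Lemma distr_prodJ z w : (P z) ^ (f w) = \prod_(i < n) distr f (a i) z ^ f w.
Proof. exact: (big_morph (conjg^~ (f w)) (fun p q => conjMg p q (f w)) (conj1g _)). Qed.

Lemma distr_prodJ_mem z w : (P z) ^ (f w) \in distr_group f.
Proof. by rewrite distr_prodJ; apply: group_prod => i _; apply: distrJ_mem. Qed.

Lemma distr_prod_cocycle x y : (P x) ^ (f y) * P y = distr f x y ^+ n * P (x * y).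
Proof.
rewrite distr_prodJ -(distr_prod_shift x y) /P.
rewrite -prodgM_commute => [|i j _ _]; last first.
  by apply: distr_group_comm; rewrite ?distrJ_mem ?mem_distr_group.
have -> : distr f x y ^+ n = \prod_(i < n) distr f x y.
  by rewrite big_const_ord iter_mulg_1.
rewrite -prodgM_commute => [|i j _ _]; last first.
  by apply: distr_group_comm; rewrite ?mem_distr_group.
by apply: eq_bigr => i _; rewrite distr_cocycle.
Qed.

Lemma distributed_average_morph (m : int) :
  (m * n%:Z = 1 %[mod #|distr_group f|%:Z])%Z ->
  {morph (fun x => f x * zexpg (P x) m) : x y / x * y}.
Proof.
move=> mn1 x y /=.
have -> : f x * zexpg (P x) m * (f y * zexpg (P y) m)
          = f x * f y * (zexpg (P x ^ f y) m * zexpg (P y) m).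
  by rewrite -zexpgJ conjgE !mulgA mulgK.
rewrite -zexpgMn; last first.
  by apply: distr_group_comm; [apply: distr_prodJ_mem | apply: distr_prod_mem].
rewrite distr_prod_cocycle zexpgMn; last first.
  apply: distr_group_comm; last exact: distr_prod_mem.
  by apply: groupX; apply: mem_distr_group.
by rewrite (zexpgXK _ mn1) ?fMdistr ?mulgA //; apply: mem_distr_group.
Qed.

End Transversal.

End Distributors.

Theorem mainTheorem12 (gT hT : finGroupType) (f : gT -> hT)
  (n : nat) (a : 'I_n -> gT) (m : int) :
  id_preserving f ->
  abelian (distr_group f) ->
  n = #|[set: gT] : fstab f|%g ->
  coprime n #|distr_group f| ->
  injective (fun i => (fstab f :* a i)%g) ->
  [set (fstab f :* a i)%g | i : 'I_n] = rcosets (fstab f) [set: gT] ->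
  (m * n%:Z = 1 %[mod (#|distr_group f|)%:Z])%Z ->
  {morph (fun x => (f x * zexpg (\prod_(i < n) distr f (a i) x) m)%g)
    : x y / (x * y)%g}.
Proof.
(* The index and coprimality hypotheses are implied by the transversal and by
   the congruence for m. *)
move=> f1 abD _ _ inj_a im_a.
exact: distributed_average_morph.
Qed.
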